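(* Let $(L,\le,(\sqsubseteq_\alpha)_{\alpha<\kappa})$ be a model of Axioms 1–4 with $\kappa$ a limit ordinal. Let $\alpha<\kappa$ and let $f:L\to L$ be $\alpha$-monotonic. Suppose $x\in L$ satisfies $x\sqsubseteq_\alpha f(x)$. Then there is $y\in L$ with the following properties: (1) $x\sqsubseteq_\alpha y$ and $y=_\alpha f(y)$; (2) for every $z\in L$, if $x\sqsubseteq_\alpha z$ and $f(z)\sqsubseteq_\alpha z$, then $y\sqsubseteq_\alpha z$; (3) $y$ is the $\le$-least element of $[y]_\alpha$; moreover $y\sqsubseteq_{\alpha+1}w$ for all $w\in[y]_\alpha$, and $y\sqsubseteq_{\alpha+1}f(y)$.
   Context: Setting (model of Axioms 1–4). Let $(L,\le)$ be a complete lattice with join operation $\bigvee$ and least element $\perp$. Let $\kappa>0$ be an ordinal, and for each ordinal $\alpha<\kappa$ let $\sqsubseteq_\alpha$ be a preorder on $L$. Derived relations: - $x=_\alpha y$ means $x\sqsubseteq_\alpha y$ and $y\sqsubseteq_\alpha x$. - $x\sqsubset_\alpha y$ means $x\sqsubseteq_\alpha y$ and not $x=_\alpha y$. Derived sets, for $x\in L$ and $\alpha<\kappa$: - $(x]_\alpha=\{y\in L:\forall\beta<\alpha,\ x=_\beta y\}$. - $[x]_\alpha=\{y\in L: x=_\alpha y\}$. For a set $X$, $X\sqsubseteq_\alpha y$ means $x\sqsubseteq_\alpha y$ for all $x\in X$. The structure is a model of Axioms 1–4 if: - (A1) for all $\alpha<\beta<\kappa$, $x\sqsubseteq_\beta y$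 implies $x=_\alpha y$; - (A2) $\bigcap_{\alpha<\kappa}=_\alpha$ is the identity relation on $L$; - (A3) for every $x\in L$, every $\alpha<\kappa$ and every $X\subseteq(x]_\alpha$ there is $y\in(x]_\alpha$ with $X\sqsubseteq_\alpha y$ such that for all $z\in(x]_\alpha$ with $X\sqsubseteq_\alpha z$ we have $y\sqsubseteq_\alpha z$ and $y\le z$; - (A4) for every nonempty $X\subseteq L$, every $\alpha<\kappa$ and every $y\in L$, if $y=_\alpha x$ for all $x\in X$ then $y=_\alpha\bigvee X$. A function $f:L\to L$ is $\alpha$-monotonic if $x\sqsubseteq_\alpha y$ implies $f(x)\sqsubseteq_\alpha f(y)$. *)

Record complete_lattice (L : Type) := {
  cl_le : L -> L -> Prop;
  cl_le_refl : forall x, cl_le x x;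
  cl_le_trans : forall x y z, cl_le x y -> cl_le y z -> cl_le x z;
  cl_le_antisym : forall x y, cl_le x y -> cl_le y x -> x = y;
  cl_sup : (L -> Prop) -> L;
  cl_sup_ub : forall (X : L -> Prop) x, X x -> cl_le x (cl_sup X);
  cl_sup_least : forall (X : L -> Prop) z,
      (forall x, X x -> cl_le x z) -> cl_le (cl_sup X) z
}.
Arguments cl_le {L} c _ _.
Arguments cl_sup {L} c _.

(** The ordinal kappa is represented by a type I of indices (the ordinals
    < kappa) with a strict well-order lt. *)
Record well_order {I : Type} (lt : I -> I -> Prop) : Prop := {
  wo_irrefl : forall a, ~ lt a a;
  wo_trans : forall a b c, lt a b -> lt b c -> lt a c;
  wo_total : forall a b, lt a b \/ a = b \/ lt b a;
  wo_wf : well_founded lt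
}.

(** kappa is a limit ordinal: kappa > 0 and every alpha < kappa has
    alpha + 1 < kappa. *)
Definition is_limit {I : Type} (lt : I -> I -> Prop) : Prop :=
  (exists a : I, True) /\ forall a : I, exists b, lt a b.

Definition is_succ {I : Type} (lt : I -> I -> Prop) (a b : I) : Prop :=
  lt a b /\ forall c, lt a c -> c = b \/ lt b c.

Definition is_preorder {L : Type} (R : L -> L -> Prop) : Prop :=
  (forall x, R x x) /\ (forall x y z, R x y -> R y z -> R x z).

Section Derived.
Context {L I : Type} (lt : I -> I -> Prop) (sq : I -> L -> L -> Prop).

Definition eqa (a : I) (x y : L) : Prop := sq a x y /\ sq a y x.

Definition sqlt (a : I) (x y : L) : Prop := sq a x y /\ ~ eqa a x y.

Definition lowcone (x : L) (a : I) : L -> Prop :=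
  fun y => forall b, lt b a -> eqa b x y.

Definition eqclass (x : L) (a : I) : L -> Prop := fun y => eqa a x y.

Definition set_sq (a : I) (X : L -> Prop) (y : L) : Prop :=
  forall x, X x -> sq a x y.

Definition alpha_monotonic (a : I) (f : L -> L) : Prop :=
  forall x y, sq a x y -> sq a (f x) (f y).
End Derived.

Definition model_A1_4 {L I : Type} (CL : complete_lattice L)
    (lt : I -> I -> Prop) (sq : I -> L -> L -> Prop) : Prop :=
  (forall a, is_preorder (sq a)) /\
  (forall a b x y, lt a b -> sq b x y -> eqa sq a x y) /\
  (forall x y, (forall a, eqa sq a x y) -> x = y) /\
  (forall x a (X : L -> Prop),
      (forall z, X z -> lowcone lt sq x a z) ->
      exists y, lowcone lt sq x a y /\ set_sq sq a X y /\
        forall z, lowcone lt sq x a z -> set_sq sq a X z ->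
          sq a y z /\ cl_le CL y z) /\
  (forall (X : L -> Prop) a y, (exists x, X x) ->
      (forall x, X x -> eqa sq a y x) -> eqa sq a y (cl_sup CL X)).


(** Proof idea (a Knaster–Tarski argument inside the cone (x]_α).
    Axiom 3 provides, for every subset X of a cone (x]_α, a "cone join": a
    ⊑_α-least upper bound of X in (x]_α that is also ≤-below every other
    upper bound in the cone.  Taking X to consist of x together with all
    z ⊒_α x lying ⊑_α-below every prefixed point p ⊒_α x of f, its cone join
    y is ⊑_α-below all such p and, by monotonicity, f y is again in X, so
    y =_α f y.  Two general facts about cone joins then give (3): a cone join
    is ≤-least in its own class [y]_α, and an element that is ≤-least in
    [y]_α is ⊑_{α+1}-below that whole class, because (y]_{α+1} = [y]_α and
    the cone join of ∅ in (y]_{α+1} must be y itself. *)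

Definition cone_join {L I : Type} (CL : complete_lattice L)
    (lt : I -> I -> Prop) (sq : I -> L -> L -> Prop)
    (x : L) (a : I) (X : L -> Prop) (y : L) : Prop :=
  lowcone lt sq x a y /\ set_sq sq a X y /\
  forall z, lowcone lt sq x a z -> set_sq sq a X z ->
    sq a y z /\ cl_le CL y z.

Section ConeJoins.

Context {L I : Type} {CL : complete_lattice L}.
Context {lt : I -> I -> Prop} {sq : I -> L -> L -> Prop}.

Hypothesis sq_refl : forall c u, sq c u u.
Hypothesis sq_trans : forall c u v w, sq c u v -> sq c v w -> sq c u w.
Hypothesis A1 : forall b c u v, lt b c -> sq c u v -> eqa sq b u v.
Hypothesis A3 : forall x c X, (forall z, X z -> lowcone lt sq x c z) ->
  exists y, cone_join CL lt sq x c X y.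

Local Notation cone := (lowcone lt sq).

Lemma lowcone_refl (x : L) (c : I) : cone x c x.
Proof. intros b _. split; apply sq_refl. Qed.

(** Cones are closed upwards along ⊑_c: by Axiom 1, y ⊑_c w makes y and w
    equal at every level below c. *)
Lemma lowcone_up (x : L) (c : I) (y w : L) :
  cone x c y -> sq c y w -> cone x c w.
Proof.
  intros Hy Hyw b Hb.
  destruct (Hy b Hb) as [Hxy Hyx].
  destruct (A1 b c y w Hb Hyw) as [Hyw' Hwy'].
  split; eapply sq_trans; eassumption.
Qed.

Lemma lowcone_above (x : L) (c : I) (z : L) : sq c x z -> cone x c z.
Proof. exact (lowcone_up x c x z (lowcone_refl x c)). Qed.

Lemma cone_join_least_in_class (x : L) (c : I) (X : L -> Prop) (y : L) :
  cone_join CL lt sq x c X y ->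
  forall w, eqclass sq y c w -> cl_le CL y w.
Proof.
  intros [Hy [Hub Hleast]] w [Hyw _].
  apply (Hleast w).
  - exact (lowcone_up x c y w Hy Hyw).
  - intros z Hz. exact (sq_trans c z y w (Hub z Hz) Hyw).
Qed.

Hypothesis Hwo : well_order lt.

(** For the successor c1 = c + 1, the class [y]_c lies inside (y]_{c+1}:
    every level below c + 1 is either c itself or below c. *)
Lemma eqclass_in_succ_cone (c c1 : I) (y w : L) :
  is_succ lt c c1 -> eqclass sq y c w -> cone y c1 w.
Proof.
  intros [_ Hsucc] Hw b Hb.
  destruct (wo_total _ Hwo b c) as [Hbc | [-> | Hcb]].
  - exact (A1 b c y w Hbc (proj1 Hw)).
  - exact Hw.
  - exfalso. destruct (Hsucc b Hcb) as [-> | Hc1b].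
    + exact (wo_irrefl _ Hwo _ Hb).
    + exact (wo_irrefl _ Hwo _ (wo_trans _ Hwo _ _ _ Hb Hc1b)).
Qed.

(** If y is ≤-least in [y]_c, then y ⊑_{c+1} w for all w ∈ [y]_c: the cone
    join y' of ∅ in (y]_{c+1} lies in [y]_c and below y, hence equals y. *)
Lemma least_in_class_succ (c c1 : I) (y : L) :
  is_succ lt c c1 ->
  (forall w, eqclass sq y c w -> cl_le CL y w) ->
  forall w, eqclass sq y c w -> sq c1 y w.
Proof.
  intros Hc1 Hleast.
  destruct (A3 y c1 (fun _ => False)) as [y' [Hy' [_ Hy'least]]];
    [intros z [] |].
  assert (Hnone : forall z, set_sq sq c1 (fun _ => False) z)
    by (intros z u []).
  assert (Hy'y : y' = y).
  { apply (cl_le_antisym _ CL).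
    - exact (proj2 (Hy'least y (lowcone_refl y c1) (Hnone y))).
    - exact (Hleast y' (Hy' c (proj1 Hc1))). }
  subst y'.
  intros w Hw.
  exact (proj1 (Hy'least w (eqclass_in_succ_cone c c1 y w Hc1 Hw) (Hnone w))).
Qed.

End ConeJoins.

Section LeastFixedPoint.

Context {L I : Type} {CL : complete_lattice L}.
Context {lt : I -> I -> Prop} {sq : I -> L -> L -> Prop}.

Hypothesis sq_refl : forall c u, sq c u u.
Hypothesis sq_trans : forall c u v w, sq c u v -> sq c v w -> sq c u w.
Hypothesis A1 : forall b c u v, lt b c -> sq c u v -> eqa sq b u v.

Variables (c : I) (f : L -> L).
Hypothesis Hmono : alpha_monotonic sq c f.

Definition prefixed_above (x p : L) : Prop := sq c x p /\ sq c (f p) p.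

(** The set whose cone join is the least fixed point above x: x itself and
    every z ⊒_c x that is ⊑_c-below all prefixed points above x. *)
Definition fixpoint_generators (x : L) : L -> Prop :=
  fun z => z = x \/ (sq c x z /\ forall p, prefixed_above x p -> sq c z p).

Lemma fixpoint_generators_in_cone (x z : L) :
  fixpoint_generators x z -> lowcone lt sq x c z.
Proof.
  intros [-> | [Hxz _]].
  - exact (lowcone_refl sq_refl x c).
  - exact (lowcone_above sq_refl sq_trans A1 x c z Hxz).
Qed.

Section Join.

Variables (x y : L).
Hypothesis Hx : sq c x (f x).
Hypothesis Hy : cone_join CL lt sq x c (fixpoint_generators x) y.

Lemma generators_join_above : sq c x y.
Proof. apply (proj1 (proj2 Hy)). now left. Qed.

(** Every prefixed point above x is an upper bound of the generators in
    (x]_c, so it lies ⊑_c-above their join. *)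
Lemma generators_join_below_prefixed (p : L) :
  prefixed_above x p -> sq c y p.
Proof.
  intros [Hxp Hfp]. destruct Hy as [_ [_ Hleast]].
  apply (Hleast p).
  - exact (lowcone_above sq_refl sq_trans A1 x c p Hxp).
  - intros z [-> | [_ Hz]]; [exact Hxp | exact (Hz p (conj Hxp Hfp))].
Qed.

(** f y is again a generator, hence f y ⊑_c y; then f y is a prefixed point
    above x, hence y ⊑_c f y. *)
Lemma generators_join_fixed : eqa sq c y (f y).
Proof.
  pose proof generators_join_above as Hxy.
  assert (Hxfy : sq c x (f y)) by exact (sq_trans c _ _ _ Hx (Hmono x y Hxy)).
  assert (Hfyy : sq c (f y) y).
  { apply (proj1 (proj2 Hy)). right. split; [exact Hxfy |].
    intros p [Hxp Hfp].
    apply (sq_trans c _ (f p)); [apply Hmono | exact Hfp].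
    exact (generators_join_below_prefixed p (conj Hxp Hfp)). }
  split; [| exact Hfyy].
  exact (generators_join_below_prefixed (f y) (conj Hxfy (Hmono _ _ Hfyy))).
Qed.

End Join.

End LeastFixedPoint.

(** The main theorem: y is the cone join in (x]_α of the fixed-point
    generators of x, whose existence is Axiom 3. *)
Theorem mainTheorem3 (L I : Type) (CL : complete_lattice L)
    (lt : I -> I -> Prop) (sq : I -> L -> L -> Prop)
    (Hwo : well_order lt) (Hmodel : model_A1_4 CL lt sq)
    (Hlim : is_limit lt)
    (a : I) (f : L -> L) (Hmono : alpha_monotonic sq a f)
    (x : L) (Hx : sq a x (f x)) :
  exists y : L,
    (sq a x y /\ eqa sq a y (f y)) /\
    (forall z, sq a x z -> sq a (f z) z -> sq a y z) /\
    (eqclass sq y a y /\ (forall w, eqclass sq y a w -> cl_le CL y w)) /\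
    (forall a1, is_succ lt a a1 ->
       (forall w, eqclass sq y a w -> sq a1 y w) /\ sq a1 y (f y)).
Proof.
  destruct Hmodel as [Hpre [A1 [_ [A3 _]]]].
  pose proof (fun c => proj1 (Hpre c)) as refl.
  pose proof (fun c => proj2 (Hpre c)) as trans.
  destruct (A3 x a (fixpoint_generators a f x)
              (fixpoint_generators_in_cone refl trans A1 a f x)) as [y Hy].
  pose proof (generators_join_fixed refl trans A1 a f Hmono x y Hx Hy) as Hfix.
  pose proof (cone_join_least_in_class trans A1 x a _ y Hy) as Hleast.
  exists y. split; [| split; [| split]].
  - exact (conj (generators_join_above a f x y Hy) Hfix).
  - intros z Hxz Hfz.
    exact (generators_join_below_prefixed refl trans A1 a f x y Hy
             z (conj Hxz Hfz)).
  - split; [split; apply refl | exact Hleast].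
  - intros a1 Ha1.
    pose proof (least_in_class_succ refl A1 A3 Hwo a a1 y Ha1 Hleast) as Hsucc.
    exact (conj Hsucc (Hsucc (f y) Hfix)).
Qed.
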